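(* For integers $F\ge1$ and $0\le Z\le F$, $$s(F,2,Z)=\begin{cases}2F-3Z & \text{if } F\ge 2Z,\\ F-Z & \text{otherwise.}\end{cases}$$
   Context: A placement delivery array $S$-PDA$(F,K,Z)$ is an $F\times K$ array $R=(r_{j,k})$, $1\le j\le F$, $1\le k\le K$, over a finite set $S$ such that: (1) each cell is either empty or contains an element of $S$; (2) each column contains exactly $Z$ empty cells; (3) each element of $S$ occurs at most once in each row and at most once in each column; (4) if two distinct nonempty cells satisfy $r_{j_1,k_1}=r_{j_2,k_2}=t\in S$, then the cells $r_{j_1,k_2}$ and $r_{j_2,k_1}$ are empty. For integers $F,K\ge1$, $0\le Z\le F$, define $s(F,K,Z)=\min\{|S| : \text{there exists an } S\text{-PDA}(F,K,Z)\}$. *)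

From mathcomp Require Import all_boot.
Set Implicit Arguments. Unset Strict Implicit. Unset Printing Implicit Defensive.

(* An F x K array over a finite symbol set S, with S represented as 'I_n
   (any finite set S is in bijection with 'I_|S|).  A cell is [None] when
   empty and [Some t] when it contains the symbol t. *)
Definition array (F K n : nat) := 'I_F -> 'I_K -> option 'I_n.

Definition is_PDA (F K Z n : nat) (R : array F K n) : Prop :=
  (forall k : 'I_K, #|[set j : 'I_F | R j k == None]| = Z) /\
  (forall (j : 'I_F) (k1 k2 : 'I_K) (t : 'I_n),
      R j k1 = Some t -> R j k2 = Some t -> k1 = k2) /\
  (forall (j1 j2 : 'I_F) (k : 'I_K) (t : 'I_n),
      R j1 k = Some t -> R j2 k = Some t -> j1 = j2) /\
  (forall (j1 j2 : 'I_F) (k1 k2 : 'I_K) (t : 'I_n),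
      (j1, k1) <> (j2, k2) -> R j1 k1 = Some t -> R j2 k2 = Some t ->
      R j1 k2 = None /\ R j2 k1 = None).

(* [s_is F K Z m] : m = s(F,K,Z), i.e. m is the minimum of |S| over all
   S-PDA(F,K,Z): it is attained, and it is a lower bound. *)
Definition s_is (F K Z m : nat) : Prop :=
  (exists R : array F K m, is_PDA Z R) /\
  (forall (n : nat) (R : array F K n), is_PDA Z R -> m <= n).

(* Lower bound: in an S-PDA(F,K,Z) every column carries F - Z distinct symbols.
   By condition (4) a symbol shared by two columns k1, k2 sits, in k1, on a row
   whose k2-cell is empty; so at most min(Z, F - Z) symbols are shared and
   |S| >= 2(F - Z) - min(Z, F - Z).
   Upper bound: with rows split into blocks of sizes b, b, d and F - 2b - d,
   fill the first block only in column 0, the second only in column 1 (reusing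
   the same b symbols), the third with 2d fresh symbols and leave the last empty;
   take (b, d) = (Z, F - 2Z) if F >= 2Z and (F - Z, 0) otherwise. *)

From mathcomp Require Import all_boot zify.
Set Implicit Arguments. Unset Strict Implicit.

Section LowerBound.

Variables (F K Z n : nat) (R : array F K n).
Hypothesis pdaR : is_PDA Z R.

Definition filled_rows (k : 'I_K) : {set 'I_F} := [set j | R j k != None].

Definition col_symbols (k : 'I_K) : {set option 'I_n} := [set R j k | j in filled_rows k].

Lemma card_filled_rows k : #|filled_rows k| = F - Z.
Proof.
have [hcard _] := pdaR.
have := cardsC (filled_rows k); rewrite card_ord.
have -> : ~: filled_rows k = [set j | R j k == None].
  by apply/setP => j; rewrite !inE negbK.
by rewrite hcard; lia.
Qed.

Lemma card_col_symbols k : #|col_symbols k| = F - Z.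
Proof.
have [_ [_ [hcol _]]] := pdaR.
rewrite card_in_imset ?card_filled_rows // => j1 j2.
rewrite !inE; case E: (R j1 k) => [t|] // _ _ E2.
exact: (hcol _ _ k t).
Qed.

Lemma card_col_symbolsU k1 k2 : #|col_symbols k1 :|: col_symbols k2| <= n.
Proof.
apply: (@leq_trans #|[set Some t | t : 'I_n]|); last first.
  by rewrite card_imset ?card_ord //; apply: Some_inj.
apply/subset_leq_card/subsetP => x.
by rewrite inE => /orP [] /imsetP [j]; rewrite inE; case: (R _ _) => [t|] // _ ->;
  apply: imset_f.
Qed.

Lemma col_symbolsI_sub k1 k2 : k1 != k2 ->
  col_symbols k1 :&: col_symbols k2 \subset
  [set R j k1 | j in filled_rows k1 :\: filled_rows k2].
Proof.
have [_ [_ [_ h4]]] := pdaR.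
move=> hk; apply/subsetP => x; rewrite inE => /andP [/imsetP [j hj ->] /imsetP [j' _ E]].
apply: imset_f; move: hj; rewrite !inE; case E1: (R j k1) => [t|] // _.
have hne : (j, k1) <> (j', k2) by case=> _ ek; move: hk; rewrite ek eqxx.
by have [-> _] := h4 _ _ _ _ t hne E1 (etrans (esym E) E1); rewrite eqxx.
Qed.

Lemma card_col_symbolsI k1 k2 : k1 != k2 ->
  #|col_symbols k1 :&: col_symbols k2| <= minn Z (F - Z).
Proof.
have [hcard _] := pdaR.
move=> /col_symbolsI_sub /subset_leq_card /leq_trans -> //.
apply: (leq_trans (leq_imset_card _ _)); rewrite leq_min; apply/andP; split.
- rewrite -(hcard k2); apply/subset_leq_card/subsetP => j.
  by rewrite !inE negbK => /andP [].
- by rewrite -(card_filled_rows k1) subset_leq_card // subsetDl.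
Qed.

Lemma PDA_size_lower_bound (k1 k2 : 'I_K) : k1 != k2 -> 2 * (F - Z) <= n + minn Z (F - Z).
Proof.
move=> hk; have := cardsUI (col_symbols k1) (col_symbols k2).
have := card_col_symbolsU k1 k2; have := card_col_symbolsI hk.
rewrite !card_col_symbols; lia.
Qed.

End LowerBound.

Lemma card_set_ord_nat F (P : pred nat) : #|[set j : 'I_F | P j]| = count P (iota 0 F).
Proof.
rewrite -val_enum_ord count_map cardsE cardE /enum_mem size_filter.
by rewrite (@eq_filter _ _ predT) // filter_predT.
Qed.

Lemma count_iota_const (P : pred nat) a m (c : bool) :
  {in [pred i | a <= i < a + m], P =1 fun=> c} -> count P (iota a m) = c * m.
Proof.
move=> hP; rewrite (eq_in_count (a2 := fun=> c)); last by move=> i; rewrite mem_iota; apply: hP.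
by case: c {hP}; rewrite ?count_pred0 ?count_predT ?size_iota ?mul1n.
Qed.

Definition pda2_cell (b d j k : nat) : option nat :=
  if j < b then (if k == 0 then Some j else None)
  else if j < 2 * b then (if k == 0 then None else Some (j - b))
  else if j < 2 * b + d then Some (if k == 0 then j - b else j - b + d)
  else None.

Definition pda2 F b d : array F 2 (b + 2 * d) :=
  fun j k => obind insub (pda2_cell b d j k).
Arguments pda2 : clear implicits.

Ltac pda2_cell_cases :=
  rewrite /pda2_cell /=; repeat case: ifP => ?; intros;
  repeat match goal with H : Some _ = Some _ |- _ => case: H => H end;
  try discriminate; try done; lia.

Lemma pda2_cell_bound b d j k x : pda2_cell b d j k = Some x -> x < b + 2 * d.
Proof. by pda2_cell_cases. Qed.

Lemma pda2_Some F b d j k t :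
  pda2 F b d j k = Some t <-> pda2_cell b d j k = Some (val t).
Proof.
rewrite /pda2; case E: (pda2_cell b d j k) => [x|] //=.
case: insubP => [u _ <-|]; last by rewrite (pda2_cell_bound E).
by split=> [[->]|[/val_inj ->]].
Qed.

Lemma pda2_None F b d j k : pda2 F b d j k = None <-> pda2_cell b d j k = None.
Proof.
rewrite /pda2; case E: (pda2_cell b d j k) => [x|] //=.
by case: insubP => [u _ _|] //; rewrite (pda2_cell_bound E).
Qed.

Ltac pda2_block c :=
  rewrite (@count_iota_const _ _ _ c); last by move=> i; rewrite inE => /andP [? ?]; pda2_cell_cases.

Lemma pda2_card_empty F b d (k : 'I_2) : 2 * b + d <= F ->
  #|[set j : 'I_F | pda2 F b d j k == None]| = b + (F - 2 * b - d).
Proof.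
move=> hF; rewrite (eq_finset (fun j : 'I_F => pda2_cell b d j k == None)); last first.
  by move=> j; apply/eqP/eqP => /pda2_None.
rewrite (card_set_ord_nat F (fun j => pda2_cell b d j k == None)).
have -> : F = b + b + d + (F - 2 * b - d) by lia.
rewrite !iotaD !count_cat !add0n.
case: k => [[|[|k]] ?] //=.
- pda2_block false; pda2_block true; pda2_block false; pda2_block true; lia.
- pda2_block true; pda2_block false; pda2_block false; pda2_block true; lia.
Qed.

Lemma pda2_is_PDA F Z b d :
  2 * b + d <= F -> Z = b + (F - 2 * b - d) -> is_PDA Z (pda2 F b d).
Proof.
move=> hF ->; split; [by move=> k; apply: pda2_card_empty | split; [|split]].
- move=> j [[|[|k1]] ?] [[|[|k2]] ?] t //= /pda2_Some h1 /pda2_Some h2;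
    apply: val_inj; move: h1 h2; pda2_cell_cases.
- move=> j1 j2 [[|[|k]] ?] t //= /pda2_Some h1 /pda2_Some h2;
    apply: val_inj; move: h1 h2; pda2_cell_cases.
- move=> j1 j2 [[|[|k1]] ?] [[|[|k2]] ?] t //= hne /pda2_Some h1 /pda2_Some h2;
    [ exfalso; apply: hne; congr pair; apply: val_inj
    | split; apply/pda2_None
    | split; apply/pda2_None
    | exfalso; apply: hne; congr pair; apply: val_inj ];
    move: h1 h2; pda2_cell_cases.
Qed.

Theorem mainTheorem4 (F Z : nat) (hF : 1 <= F) (hZ : Z <= F) :
  s_is F 2 Z (if 2 * Z <= F then 2 * F - 3 * Z else F - Z).
Proof.
have pda2_s_is b d : 2 * b + d <= F -> Z = b + (F - 2 * b - d) ->
    2 * (F - Z) - minn Z (F - Z) = b + 2 * d -> s_is F 2 Z (b + 2 * d).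
  move=> hbd hZbd hval; split; first by exists (pda2 F b d); apply: pda2_is_PDA.
  move=> n R /PDA_size_lower_bound /(_ ord0 ord_max isT); lia.
case: ifP => h.
- have -> : 2 * F - 3 * Z = Z + 2 * (F - 2 * Z) by lia.
  apply: pda2_s_is; lia.
- have -> : F - Z = (F - Z) + 2 * 0 by lia.
  apply: pda2_s_is; lia.
Qed.
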